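(* Let $G=\langle c,s\rangle$ and $K$ be as in the context, let $n\ge1$ and let $\gamma,\gamma_1,\ldots,\gamma_n,\beta_1,\ldots,\beta_n$ be integers. For $i=1,\ldots,n$ let $B_i=\{j:\gamma_j=\gamma_i\}$, let $\gamma_0=\max\{|\gamma_1|,\ldots,|\gamma_n|\}$, and let $F=(c^{s^{\gamma_1}})^{\beta_1}\cdots(c^{s^{\gamma_n}})^{\beta_n}\in K^{\langle s\rangle}$, regarded as a function $\langle s\rangle\to K$. Then the element $w=F s^{\gamma}$ is trivial in $G$ if and only if $\gamma=0$, $\sum_{j\in B_i}\beta_j=0$ for $i=1,\ldots,n$, and $F(s^{\mu})=1$ in $K$ for all integers $\mu$ with $-3\gamma_0\le\mu\le3\gamma_0$.
   Context: Notation: $x^y=yxy^{-1}$. For groups $A,B$, the wreath product $A\,\mathrm{Wr}\,B$ is the semidirect product $A^B\rtimes B$, where $A^B$ is the group of all functions $B\to A$ with pointwise multiplication and $B$ acts by $(bf)(x)=f(xb)$, written $f^b=bfb^{-1}$. $H$ is a group generated by a countable set $\{a^{(1)},a^{(2)},\ldots\}$. Let $Z=\langle z\rangle$ be infinite cyclic and $b^{(i)}\in H^Z$ with $b^{(i)}(z^k)=a^{(i)}$ if $k>0$ and $1$ otherwise; $K=\langle z,b^{(i)}\ (i\in\mathbb{N})\rangle\le H\,\mathrm{Wr}\,Z$. Let $\langle s\rangle$ be infinite cyclic and $c\in K^{\langle s\rangle}$ with $c(s)=z$, $c(s^{2^i})=b^{(i)}$ for $i>0$, $c(s^k)=1$ otherwise;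 $G=\langle c,s\rangle\le K\,\mathrm{Wr}\,\langle s\rangle$. *)

From Stdlib Require Import ZArith List Lia FunctionalExtensionality Bool.
Import ListNotations.
Open Scope Z_scope.

Record group := Group {
  gcar :> Type;
  gmul : gcar -> gcar -> gcar;
  gone : gcar;
  ginv : gcar -> gcar;
  gmulA : forall x y z, gmul x (gmul y z) = gmul (gmul x y) z;
  gmul1 : forall x, gmul gone x = x;
  gmulV : forall x, gmul (ginv x) x = gone
}.
Arguments gmul {g}. Arguments gone {g}. Arguments ginv {g}.

Definition gpow_nat {G : group} (x : G) (n : nat) : G :=
  Nat.iter n (gmul x) gone.
Definition gpow {G : group} (x : G) (k : Z) : G :=
  match k with
  | Z0 => gone
  | Zpos p => gpow_nat x (Pos.to_nat p)
  | Zneg p => ginv (gpow_nat x (Pos.to_nat p))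
  end.

(* conjugation, following the paper's notation  x^y = y x y^{-1} *)
Definition gconj {G : group} (x y : G) : G := gmul y (gmul x (ginv y)).

Definition gprod {G : group} (l : list G) : G := fold_right gmul gone l.

Inductive generated {G : group} (S : G -> Prop) : G -> Prop :=
| gen_in x : S x -> generated S x
| gen_one : generated S gone
| gen_mul x y : generated S x -> generated S y -> generated S (gmul x y)
| gen_inv x : generated S x -> generated S (ginv x).

(* Unrestricted wreath product  A Wr Z  with Z = <t> infinite cyclic.
   An element f t^k (f : Z -> A, the function t^x |-> f x) is the pair (f, k).
   Since t^k f t^-k = f^{t^k} with f^{t^k}(t^x) = f(t^(x+k)),
   (f,k)(g,m) = (x |-> f x * g (x+k), k+m). *)
Definition wr_mul (A : group) (u v : (Z -> A) * Z) : (Z -> A) * Z :=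
  (fun x => gmul (fst u x) (fst v (x + snd u)), snd u + snd v).
Definition wr_one (A : group) : (Z -> A) * Z := (fun _ => gone, 0).
Definition wr_inv (A : group) (u : (Z -> A) * Z) : (Z -> A) * Z :=
  (fun x => ginv (fst u (x - snd u)), - snd u).

Lemma wr_mulA (A : group) x y z :
  wr_mul A x (wr_mul A y z) = wr_mul A (wr_mul A x y) z.
Proof.
  destruct x as [f k], y as [g m], z as [h n]; unfold wr_mul; simpl.
  f_equal; [apply functional_extensionality; intro t; rewrite gmulA, Z.add_assoc; reflexivity | lia].
Qed.

Lemma wr_mul1 (A : group) x : wr_mul A (wr_one A) x = x.
Proof.
  destruct x as [f k]; unfold wr_mul, wr_one; simpl.
  f_equal; apply functional_extensionality; intro t; rewrite gmul1, Z.add_0_r; reflexivity.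
Qed.

Lemma wr_mulV (A : group) x : wr_mul A (wr_inv A x) x = wr_one A.
Proof.
  destruct x as [f k]; unfold wr_mul, wr_inv, wr_one; simpl.
  f_equal; [apply functional_extensionality; intro t; rewrite Z.add_opp_r, gmulV; reflexivity | lia].
Qed.

Definition WrZ (A : group) : group :=
  Group ((Z -> A) * Z) (wr_mul A) (wr_one A) (wr_inv A) (wr_mulA A) (wr_mul1 A) (wr_mulV A).

Definition wr_top (A : group) : WrZ A := (fun _ => gone, 1).
Definition wr_base {A : group} (u : WrZ A) : Z -> A := fst u.

(* --- The groups of the paper, given H and its generators a^(1), a^(2), ... (a : nat -> H, a 0 unused) --- *)

Definition z_el (H : group) : WrZ H := wr_top H.
Definition b_el (H : group) (a : nat -> H) (i : nat) : WrZ H :=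
  (fun k => if 0 <? k then a i else gone, 0).

(* K <= H Wr Z; we work in the ambient group (H Wr Z) Wr <s>, which contains
   K Wr <s> (and hence G = <c, s>) as a subgroup. *)
Definition KWr (H : group) : group := WrZ (WrZ H).

(* c : s^1 |-> z, s^(2^i) |-> b^(i) (i > 0), s^k |-> 1 otherwise *)
Definition c_fun (H : group) (a : nat -> H) (mu : Z) : WrZ H :=
  if mu =? 1 then z_el H
  else if andb (1 <? mu) (2 ^ Z.log2 mu =? mu) then b_el H a (Z.to_nat (Z.log2 mu))
  else gone.
Definition c_el (H : group) (a : nat -> H) : KWr H := (c_fun H a, 0).
Definition s_el (H : group) : KWr H := wr_top (WrZ H).

Definition F_el (H : group) (a : nat -> H) (n : nat) (gam bet : nat -> Z) : KWr H :=
  gprod (map (fun i => gpow (gconj (c_el H a) (gpow (s_el H) (gam i))) (bet i)) (seq 1 n)).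

Definition block_sum (n : nat) (gam bet : nat -> Z) (i : nat) : Z :=
  fold_right Z.add 0 (map bet (filter (fun j => gam j =? gam i) (seq 1 n))).

Definition gam0 (n : nat) (gam : nat -> Z) : Z :=
  fold_right Z.max 0 (map (fun j => Z.abs (gam j)) (seq 1 n)).

From Stdlib Require Import ZArith List Lia Bool FunctionalExtensionality.
Open Scope Z_scope.

(* Write F = (f, 0) in the base group, so that f(mu) = prod_j c(s^(mu + gam_j))^(bet_j)
   and w = (f, gamma); thus w = 1 iff gamma = 0 and f = 1 everywhere.  The function c
   lives on the powers of two and has z-exponent 1 exactly at s^1, so the z-exponent of
   f(s^(1 - gam_i)) is the block sum of B_i: the conditions are necessary.  Conversely,
   for mu < -3 gam_0 no position mu + gam_j is positive, and for mu > 3 gam_0 all of them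
   lie in [mu - gam_0, 2 (mu - gam_0)), which contains at most one power of two; so f(mu)
   is a power of a single value of c whose exponent is a block sum, hence trivial. *)

Arguments gmulA {g}. Arguments gmul1 {g}. Arguments gmulV {g}.

Section GroupFacts.
Variable G : group.
Implicit Types x y u v : G.

Lemma gmulVr x : gmul x (ginv x) = gone.
Proof.
  rewrite <- (gmul1 (gmul x (ginv x))), <- (gmulV (ginv x)) at 1.
  rewrite <- gmulA, (gmulA (ginv x) x (ginv x)), gmulV, gmul1.
  apply gmulV.
Qed.

Lemma gmul1r x : gmul x gone = x.
Proof. rewrite <- (gmulV x), gmulA, gmulVr, gmul1. reflexivity. Qed.

Lemma ginv_unique u v : gmul u v = gone -> u = ginv v.
Proof. intro E. rewrite <- (gmul1r u), <- (gmulVr v), gmulA, E, gmul1. reflexivity. Qed.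

Lemma ginv1 : @ginv G gone = gone.
Proof. symmetry; apply ginv_unique, gmul1. Qed.

Lemma ginvM x y : ginv (gmul x y) = gmul (ginv y) (ginv x).
Proof.
  symmetry; apply ginv_unique.
  rewrite <- gmulA, (gmulA (ginv x) x y), gmulV, gmul1, gmulV. reflexivity.
Qed.

Lemma gprod_cons x l : gprod (x :: l) = gmul x (gprod l).
Proof. reflexivity. Qed.

Lemma gmul_gpow_nat_comm x m : gmul x (gpow_nat x m) = gmul (gpow_nat x m) x.
Proof.
  induction m as [|m IH]; simpl.
  - rewrite gmul1r, gmul1. reflexivity.
  - rewrite <- gmulA, <- IH. reflexivity.
Qed.

Lemma gpowS x k : gpow x (Z.succ k) = gmul x (gpow x k).
Proof.
  destruct k as [|p|p].
  - reflexivity.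
  - rewrite <- Pos2Z.inj_succ. simpl. rewrite Pos2Nat.inj_succ. reflexivity.
  - destruct (Pos.succ_pred_or p) as [->|Hp].
    + simpl. rewrite gmul1r, gmulVr. reflexivity.
    + rewrite <- Hp. replace (Z.succ (Zneg (Pos.succ (Pos.pred p)))) with (Zneg (Pos.pred p)) by lia.
      unfold gpow. rewrite Pos2Nat.inj_succ. simpl.
      rewrite gmul_gpow_nat_comm, ginvM, gmulA, gmulVr, gmul1. reflexivity.
Qed.

Lemma gpowP x k : gpow x (Z.pred k) = gmul (ginv x) (gpow x k).
Proof. rewrite <- (Z.succ_pred k) at 2. rewrite gpowS, gmulA, gmulV, gmul1. reflexivity. Qed.

Lemma gpowD x k m : gpow x (k + m) = gmul (gpow x k) (gpow x m).
Proof.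
  induction k as [|k IH|k IH] using Z.peano_ind.
  - simpl. rewrite gmul1. reflexivity.
  - rewrite Z.add_succ_l, !gpowS, IH, gmulA. reflexivity.
  - rewrite Z.add_pred_l, !gpowP, IH, gmulA. reflexivity.
Qed.

Lemma gpow1g k : gpow (@gone G) k = gone.
Proof.
  assert (E : forall m, gpow_nat (@gone G) m = gone).
  { induction m as [|m IH]; simpl; [reflexivity | rewrite IH, gmul1; reflexivity]. }
  destruct k; simpl; rewrite ?E, ?ginv1; reflexivity.
Qed.

Lemma gprod_gpow_indicator (y : nat -> G) (x : G) (P : nat -> bool) (b : nat -> Z) l :
  (forall j, In j l -> y j = if P j then x else gone) ->
  gprod (map (fun j => gpow (y j) (b j)) l) = gpow x (fold_right Z.add 0 (map b (filter P l))).
Proof.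
  induction l as [|j l IH]; intro Hy; [reflexivity|].
  simpl map. rewrite gprod_cons, IH by (intros; apply Hy; right; assumption).
  rewrite (Hy j) by (left; reflexivity).
  destruct (P j); simpl.
  - rewrite gpowD. reflexivity.
  - rewrite gpow1g, gmul1. reflexivity.
Qed.

End GroupFacts.

Lemma sum_mul_indicator (P : nat -> bool) (b : nat -> Z) l :
  fold_right Z.add 0 (map (fun j => b j * (if P j then 1 else 0)) l)
  = fold_right Z.add 0 (map b (filter P l)).
Proof. induction l as [|j l IH]; simpl; [reflexivity|]. destruct (P j); simpl; rewrite IH; lia. Qed.

Section WreathFacts.
Variable A : group.

Lemma wr_eq (f g : Z -> A) k m :
  (forall x, f x = g x) -> k = m -> ((f, k) : WrZ A) = (g, m).
Proof. intros Efg ->. f_equal. apply functional_extensionality, Efg. Qed.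

Lemma wr_pow_top k : gpow (wr_top A) k = ((fun _ => gone, k) : WrZ A).
Proof.
  assert (E : forall m, gpow_nat (wr_top A) m = ((fun _ => gone, Z.of_nat m) : WrZ A)).
  { induction m as [|m IH]; [reflexivity|].
    simpl gpow_nat. rewrite IH. apply wr_eq; [intro; apply gmul1 | cbn [snd wr_top]; lia]. }
  destruct k as [|p|p]; simpl; rewrite ?E, ?positive_nat_Z; [reflexivity | reflexivity|].
  apply wr_eq; [intro; apply ginv1 | reflexivity].
Qed.

Lemma wr_pow_base (f : Z -> A) k :
  gpow ((f, 0) : WrZ A) k = ((fun x => gpow (f x) k, 0) : WrZ A).
Proof.
  assert (E : forall m, gpow_nat ((f, 0) : WrZ A) m = ((fun x => gpow_nat (f x) m, 0) : WrZ A)).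
  { induction m as [|m IH]; [reflexivity|].
    simpl gpow_nat. rewrite IH. apply wr_eq; [intro x; simpl; rewrite Z.add_0_r | ]; reflexivity. }
  destruct k as [|p|p]; simpl; rewrite ?E; [reflexivity | reflexivity |].
  apply wr_eq; [intro x; simpl; rewrite Z.sub_0_r | ]; reflexivity.
Qed.

Lemma wr_conj_top (f : Z -> A) k :
  gconj ((f, 0) : WrZ A) (gpow (wr_top A) k) = ((fun x => f (x + k), 0) : WrZ A).
Proof.
  rewrite wr_pow_top. apply wr_eq; simpl.
  - intro x. rewrite ginv1, gmul1, gmul1r. reflexivity.
  - lia.
Qed.

Lemma wr_prod_base (fs : nat -> Z -> A) l :
  gprod (map (fun i => ((fs i, 0) : WrZ A)) l)
  = ((fun x => gprod (map (fun i => fs i x) l), 0) : WrZ A).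
Proof.
  induction l as [|i l IH]; [reflexivity|].
  simpl map. rewrite gprod_cons.
  transitivity (gmul ((fs i, 0) : WrZ A) ((fun x => gprod (map (fun i => fs i x) l), 0) : WrZ A));
    [f_equal; exact IH |].
  apply wr_eq; [intro x; simpl; rewrite Z.add_0_r |]; reflexivity.
Qed.

Lemma wr_snd_pow (u : WrZ A) k : snd (gpow u k) = k * snd u.
Proof.
  assert (E : forall m, snd (gpow_nat u m) = Z.of_nat m * snd u).
  { induction m as [|m IH]; [reflexivity|].
    change (snd u + snd (gpow_nat u m) = Z.of_nat (S m) * snd u). rewrite IH. lia. }
  destruct k as [|p|p]; [reflexivity | |].
  - change (snd (gpow_nat u (Pos.to_nat p)) = Zpos p * snd u). rewrite E, positive_nat_Z. lia.
  - change (- snd (gpow_nat u (Pos.to_nat p)) = Zneg p * snd u). rewrite E, positive_nat_Z. lia.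
Qed.

Lemma wr_snd_prod_pow (u : nat -> WrZ A) (b : nat -> Z) l :
  snd (gprod (map (fun j => gpow (u j) (b j)) l))
  = fold_right Z.add 0 (map (fun j => b j * snd (u j)) l).
Proof.
  induction l as [|j l IH]; [reflexivity|].
  simpl map. rewrite gprod_cons. simpl fold_right. rewrite <- IH, <- wr_snd_pow. reflexivity.
Qed.

Lemma wr_mul_base_top_eq1 (f : Z -> A) k :
  gmul ((f, 0) : WrZ A) (fun _ => gone, k) = gone <-> k = 0 /\ forall x, f x = gone.
Proof.
  split.
  - intro E. split.
    + apply (f_equal snd) in E. simpl in E. lia.
    + intro x. apply (f_equal (fun w => fst w x)) in E. simpl in E.
      rewrite gmul1r in E. exact E.
  - intros [-> Ef]. apply wr_eq; [intro x; simpl; rewrite Ef, gmul1 |]; reflexivity.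
Qed.

End WreathFacts.

Definition pow2b (m : Z) : bool := (0 <? m) && (2 ^ Z.log2 m =? m).

Lemma pow2bP m : pow2b m = true -> 0 < m /\ 2 ^ Z.log2 m = m.
Proof.
  unfold pow2b. rewrite andb_true_iff, Z.ltb_lt, Z.eqb_eq. tauto.
Qed.

Lemma pow2_window_unique lo p q :
  lo <= p < 2 * lo -> lo <= q < 2 * lo -> pow2b p = true -> pow2b q = true -> p = q.
Proof.
  assert (Hle : forall p q, lo <= p < 2 * lo -> lo <= q < 2 * lo ->
            pow2b p = true -> pow2b q = true -> p <= q -> p = q).
  { intros p' q' Hp Hq Pp Pq Hpq.
    destruct (pow2bP _ Pp) as [p_gt0 Ep], (pow2bP _ Pq) as [q_gt0 Eq].
    assert (L : Z.log2 p' <= Z.log2 q') by (apply Z.log2_le_mono; lia).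
    destruct (Z.eq_dec (Z.log2 p') (Z.log2 q')) as [e|ne].
    - rewrite <- Ep, <- Eq, e. reflexivity.
    - assert (D : 2 ^ (Z.log2 p' + 1) <= 2 ^ Z.log2 q')
        by (apply Z.pow_le_mono_r; [lia | pose proof (Z.log2_nonneg p'); lia]).
      rewrite Z.pow_add_r in D by (try apply Z.log2_nonneg; lia). lia. }
  intros Hp Hq Pp Pq. destruct (Z.le_ge_cases p q).
  - apply Hle; assumption.
  - symmetry; apply Hle; assumption.
Qed.

Lemma c_fun_not_pow2 H a m : pow2b m = false -> c_fun H a m = gone.
Proof.
  unfold c_fun, pow2b. intro Pm.
  destruct (Z.eqb_spec m 1) as [->|_]; [discriminate|].
  destruct (Z.ltb_spec 1 m); [|reflexivity].
  replace (0 <? m) with true in Pm by (symmetry; apply Z.ltb_lt; lia).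
  simpl in *. rewrite Pm. reflexivity.
Qed.

Lemma c_fun_snd H a m : snd (c_fun H a m) = if m =? 1 then 1 else 0.
Proof. unfold c_fun. destruct (m =? 1); [reflexivity|]. destruct andb; reflexivity. Qed.

Definition F_base (H : group) (a : nat -> H) (n : nat) (gam bet : nat -> Z) (mu : Z) : WrZ H :=
  gprod (map (fun i => gpow (c_fun H a (mu + gam i)) (bet i)) (seq 1 n)).

Lemma F_el_eq H a n gam bet : F_el H a n gam bet = (F_base H a n gam bet, 0).
Proof.
  unfold F_el, F_base, c_el, s_el, KWr.
  rewrite (map_ext _ (fun i => ((fun mu => gpow (c_fun H a (mu + gam i)) (bet i), 0) : WrZ (WrZ H)))).
  - apply wr_prod_base.
  - intro i. rewrite wr_conj_top, wr_pow_base. reflexivity.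
Qed.

Lemma F_base_snd H a n gam bet i :
  snd (F_base H a n gam bet (1 - gam i)) = block_sum n gam bet i.
Proof.
  unfold F_base, block_sum. rewrite wr_snd_prod_pow, <- sum_mul_indicator.
  f_equal. apply map_ext. intro j. rewrite c_fun_snd.
  destruct (Z.eqb_spec (1 - gam i + gam j) 1), (Z.eqb_spec (gam j) (gam i)); lia.
Qed.

(* If all the positions [mu + gam j] that are powers of two come from one block, [F_base]
   at [mu] is a power of a single value of [c_fun] with a block sum as exponent. *)
Lemma F_base_eq1 H a n gam bet mu :
  (forall j k, In j (seq 1 n) -> In k (seq 1 n) ->
     pow2b (mu + gam j) = true -> pow2b (mu + gam k) = true -> gam j = gam k) ->
  (forall i, (1 <= i <= n)%nat -> block_sum n gam bet i = 0) ->
  F_base H a n gam bet mu = gone.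
Proof.
  intros Hone Hblock. unfold F_base.
  destruct (find (fun j => pow2b (mu + gam j)) (seq 1 n)) as [j0|] eqn:Ef.
  - destruct (find_some _ _ Ef) as [Hj0 Pj0].
    rewrite (gprod_gpow_indicator _ _ (c_fun H a (mu + gam j0)) (fun j => gam j =? gam j0)).
    + change (gpow (c_fun H a (mu + gam j0)) (block_sum n gam bet j0) = gone).
      rewrite Hblock; [reflexivity | apply in_seq in Hj0; lia].
    + intros j Hj. destruct (Z.eqb_spec (gam j) (gam j0)) as [->|ne]; [reflexivity|].
      apply c_fun_not_pow2. destruct (pow2b (mu + gam j)) eqn:Pj; [|reflexivity].
      exfalso. apply ne, Hone; assumption.
  - rewrite (gprod_gpow_indicator _ _ gone (fun _ => false)); [apply gpow1g|].
    intros j Hj. apply c_fun_not_pow2, (find_none _ _ Ef _ Hj).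
Qed.

Lemma pow2_shifts_outside_window (gam : nat -> Z) (J : nat -> Prop) g0 mu :
  (forall j, J j -> Z.abs (gam j) <= g0) -> 0 <= g0 ->
  mu < -3 * g0 \/ 3 * g0 < mu ->
  forall j k, J j -> J k ->
  pow2b (mu + gam j) = true -> pow2b (mu + gam k) = true -> gam j = gam k.
Proof.
  intros Hbd Hg0 Hmu j k Hj Hk Pj Pk.
  pose proof (Hbd j Hj). pose proof (Hbd k Hk). pose proof (pow2bP _ Pj).
  destruct Hmu as [Hlow|Hhigh]; [lia|].
  enough (mu + gam j = mu + gam k) by lia.
  apply (pow2_window_unique (mu - g0)); lia || assumption.
Qed.

Lemma gam0_ge n gam j : In j (seq 1 n) -> Z.abs (gam j) <= gam0 n gam.
Proof.
  unfold gam0. generalize (seq 1 n). intro l.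
  induction l as [|i l IH]; simpl; [tauto|]. intros [->|Hj]; [lia | specialize (IH Hj); lia].
Qed.

Lemma gam0_ge0 n gam : 0 <= gam0 n gam.
Proof. unfold gam0. induction (seq 1 n); simpl; lia. Qed.

Theorem lemma4 (H : group) (a : nat -> H)
  (Hgen : forall h : H, generated (fun x => exists i : nat, (0 < i)%nat /\ x = a i) h)
  (n : nat) (Hn : (1 <= n)%nat) (gamma : Z) (gam bet : nat -> Z) :
  gmul (F_el H a n gam bet) (gpow (s_el H) gamma) = gone
  <->
  (gamma = 0 /\
   (forall i : nat, (1 <= i <= n)%nat -> block_sum n gam bet i = 0) /\
   (forall mu : Z, - 3 * gam0 n gam <= mu <= 3 * gam0 n gam ->
      wr_base (F_el H a n gam bet) mu = gone)).
Proof.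
  unfold wr_base, s_el, KWr. rewrite F_el_eq, wr_pow_top, wr_mul_base_top_eq1. simpl fst.
  split.
  - intros [-> F1]. repeat split; [| intros; apply F1].
    intros i _. rewrite <- (F_base_snd H a n gam bet i), F1. reflexivity.
  - intros [-> [Hblock Hwindow]]. split; [reflexivity|]. intro mu.
    assert (Hcases : -3 * gam0 n gam <= mu <= 3 * gam0 n gam \/
                     (mu < -3 * gam0 n gam \/ 3 * gam0 n gam < mu)) by lia.
    destruct Hcases as [Hin|Hout]; [apply Hwindow, Hin|].
    apply F_base_eq1; [|exact Hblock].
    apply (pow2_shifts_outside_window gam (fun j => In j (seq 1 n)) (gam0 n gam));
      auto using gam0_ge, gam0_ge0.
Qed.
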